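(* Let $|\!|\!|\cdot|\!|\!|\in \mathbf{N}_{X^n}$ and $x:=(x_1,\ldots,x_n)\in X^n$. Then (i) $\max\{|\!|\!|(0_X,x_2,\ldots,x_n)|\!|\!|,\ldots,|\!|\!|(x_1,\ldots,x_{n-1},0_X)|\!|\!|\}\le |\!|\!|x|\!|\!|$; (ii) $|\!|\!|(x_1,0_X,\ldots,0_X)|\!|\!|\le |\!|\!|(x_1,x_2,0_X,\ldots,0_X)|\!|\!|\le\ldots\le|\!|\!|(x_1,\ldots,x_{n-1},0_X)|\!|\!|\le|\!|\!|x|\!|\!|$; (iii) $|\!|\!|x|\!|\!|_{\infty}\le |\!|\!|x|\!|\!|\le|\!|\!|x|\!|\!|_1 \le n\cdot |\!|\!|x|\!|\!|_\infty$, where $|\!|\!|x|\!|\!|_1:=\|x_1\|+\ldots+\|x_n\|$ and $|\!|\!|x|\!|\!|_\infty:=\max\{\|x_1\|,\ldots,\|x_n\|\}$.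
   Context: Let $(X,\|\cdot\|)$ be a normed vector space and $n\ge 2$. $\mathbf{N}_{X^n}$ denotes the family of all norms $|\!|\!|\cdot|\!|\!|$ on $X^n$ satisfying (A1) sign-symmetry: $|\!|\!|(x_1,\ldots,x_n)|\!|\!|=|\!|\!|(\pm x_1,\ldots,\pm x_n)|\!|\!|$ for all $(x_1,\ldots,x_n)\in X^n$ and all choices of signs; and (A2) compatibility: $|\!|\!|(0_X,\ldots,0_X,v,0_X,\ldots,0_X)|\!|\!|=\|v\|$ for all $v\in X$, with $v$ in the $i$th position, for each $i=1,\ldots,n$. *)

From HB Require Import structures.
From mathcomp Require Import all_boot all_order all_algebra.
From mathcomp Require Import all_classical all_reals all_analysis.
Set Implicit Arguments. Unset Strict Implicit. Unset Printing Implicit Defensive.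
Import Order.TTheory GRing.Theory Num.Theory.
Local Open Scope ring_scope.

Definition is_norm_prod (R : realType) (X : normedModType R) (n : nat)
  (N : ('I_n -> X) -> R) : Prop :=
  [/\ (forall x : 'I_n -> X, N x = 0 -> forall i, x i = 0),
      (forall (a : R) (x : 'I_n -> X), N (fun i => a *: x i) = `|a| * N x) &
      (forall x y : 'I_n -> X, N (fun i => x i + y i) <= N x + N y)].

Definition sign_symmetric (R : realType) (X : normedModType R) (n : nat)
  (N : ('I_n -> X) -> R) : Prop :=
  forall (x : 'I_n -> X) (s : 'I_n -> bool),
    N (fun i => if s i then - x i else x i) = N x.

Definition compatible (R : realType) (X : normedModType R) (n : nat)
  (N : ('I_n -> X) -> R) : Prop :=
  forall (i : 'I_n) (v : X), N (fun j => if j == i then v else 0) = `|v|.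

Definition in_NXn (R : realType) (X : normedModType R) (n : nat)
  (N : ('I_n -> X) -> R) : Prop :=
  [/\ is_norm_prod N, sign_symmetric N & compatible N].

Definition zero_at (X : zmodType) (n : nat) (i : 'I_n) (x : 'I_n -> X) : 'I_n -> X :=
  fun j => if j == i then 0 else x j.

Definition trunc (X : zmodType) (n k : nat) (x : 'I_n -> X) : 'I_n -> X :=
  fun j => if (j < k)%N then x j else 0.

Definition norm1 (R : realType) (X : normedModType R) (n : nat) (x : 'I_n -> X) : R :=
  \sum_(i < n) `|x i|.

Definition norminf (R : realType) (X : normedModType R) (n : nat) (x : 'I_n -> X) : R :=
  \big[Num.max/0]_(i < n) `|x i|.

(** Restricting [x] to a set of coordinates is the average of [x] and its sign
    flip off that set, so by sign symmetry and the triangle inequality it does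
    not increase the norm.  Deleting a coordinate, truncating, and isolating
    one coordinate (whose norm is [`|x i|] by compatibility) are restrictions;
    the [1]-norm bound is the triangle inequality for the decomposition of [x]
    into its coordinates. *)
From HB Require Import structures.
From mathcomp Require Import all_boot all_order all_algebra.
From mathcomp Require Import all_classical all_reals all_analysis.
Set Implicit Arguments. Unset Strict Implicit. Unset Printing Implicit Defensive.
Import Order.TTheory GRing.Theory Num.Theory.
Local Open Scope ring_scope.

Definition restrict (X : zmodType) (n : nat) (m : pred 'I_n) (x : 'I_n -> X) :
  'I_n -> X := fun j => if m j then x j else 0.

Definition single (X : zmodType) (n : nat) (i : 'I_n) (v : X) : 'I_n -> X :=
  fun j => if j == i then v else 0.

Section Restrict.
Variables (X : zmodType) (n : nat).
Implicit Types (x : 'I_n -> X) (m : pred 'I_n).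

Lemma zero_atE (i : 'I_n) x : zero_at i x = restrict (predC1 i) x.
Proof. by apply: funext => j; rewrite /zero_at /restrict /=; case: (j == i). Qed.

Lemma truncE k x : trunc k x = restrict (fun j => (j < k)%N) x.
Proof. by []. Qed.

Lemma trunc_succ k x (lt_kn : (k < n)%N) :
  trunc k x = restrict (predC1 (Ordinal lt_kn)) (trunc k.+1 x).
Proof.
apply: funext => j; rewrite /trunc /restrict /= -val_eqE /= ltnS.
by case: ltngtP => // ->; rewrite ltnn.
Qed.

Lemma single_restrict (i : 'I_n) x : single i (x i) = restrict (pred1 i) x.
Proof. by apply: funext => j; rewrite /single /restrict /=; case: eqP => // ->. Qed.

Lemma sum_single x : x = (fun j => \sum_(i < n) single i (x i) j).
Proof.
apply: funext => j; rewrite (bigD1 j) //= /single eqxx big1 ?addr0 //.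
by move=> i /negbTE; rewrite eq_sym => ->.
Qed.

End Restrict.

Section NormProd.
Variables (R : realType) (X : normedModType R) (n : nat).
Variable N : ('I_n -> X) -> R.
Hypothesis normN : is_norm_prod N.
Implicit Types (x : 'I_n -> X) (m : pred 'I_n).

Let normZ a x : N (fun i => a *: x i) = `|a| * N x.
Proof. by case: normN. Qed.

Let normD x y : N (fun i => x i + y i) <= N x + N y.
Proof. by case: normN. Qed.

Lemma norm_prod0 : N (fun _ => 0) = 0.
Proof.
have := normZ 0 (fun _ => 0); rewrite normr0 mul0r => <-.
by congr N; apply: funext => i; rewrite scaler0.
Qed.

Lemma norm_prod_ge0 x : 0 <= N x.
Proof.
have := normD x (fun i => -1 *: x i).
rewrite normZ normrN normr1 mul1r.
have -> : (fun i => x i + -1 *: x i) = (fun _ => 0).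
  by apply: funext => i; rewrite scaleN1r subrr.
by rewrite norm_prod0 -mulr2n pmulrn_lge0.
Qed.

Lemma norm_prod_sum (I : Type) (r : seq I) (f : I -> 'I_n -> X) :
  N (fun j => \sum_(i <- r) f i j) <= \sum_(i <- r) N (f i).
Proof.
elim: r => [|a r IH].
  have -> : (fun j => \sum_(i <- [::]) f i j) = (fun _ => 0).
    by apply: funext => j; rewrite big_nil.
  by rewrite norm_prod0 big_nil.
rewrite big_cons.
have -> : (fun j => \sum_(i <- a :: r) f i j) =
          (fun j => f a j + (fun j => \sum_(i <- r) f i j) j).
  by apply: funext => j; rewrite big_cons.
by apply: le_trans (normD _ _) _; rewrite lerD2l.
Qed.

Hypothesis symN : sign_symmetric N.

Lemma restrict_le m x : N (restrict m x) <= N x.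
Proof.
set y := fun j => if ~~ m j then - x j else x j.
have -> : restrict m x = (fun j => 2^-1 *: (x j + y j)).
  apply: funext => j; rewrite /restrict /y; case: (m j) => /=.
    by rewrite -mulr2n -[x j *+ 2]scaler_nat scalerA mulVf ?scale1r ?pnatr_eq0.
  by rewrite subrr scaler0.
rewrite normZ ger0_norm ?invr_ge0 ?ler0n // ler_pdivrMl ?ltr0n // mulr_natl mulr2n.
by rewrite -{2}(symN x (fun j => ~~ m j)) normD.
Qed.

Lemma zero_at_le (i : 'I_n) x : N (zero_at i x) <= N x.
Proof. by rewrite zero_atE restrict_le. Qed.

Lemma trunc_le k x : N (trunc k x) <= N x.
Proof. by rewrite truncE restrict_le. Qed.

Lemma trunc_le_succ k x : (k < n)%N -> N (trunc k x) <= N (trunc k.+1 x).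
Proof. by move=> lt_kn; rewrite (trunc_succ _ lt_kn) restrict_le. Qed.

Hypothesis compN : compatible N.

Lemma norm_coord_le (i : 'I_n) x : `|x i| <= N x.
Proof. by rewrite -(compN i) -/(single i (x i)) single_restrict restrict_le. Qed.

Lemma norminf_le x : norminf x <= N x.
Proof.
by apply: bigmax_le => [|i _]; [exact: norm_prod_ge0 | exact: norm_coord_le].
Qed.

Lemma norm_prod_le_norm1 x : N x <= norm1 x.
Proof.
rewrite {1}(sum_single x); apply: le_trans (norm_prod_sum _ _) _.
by apply: ler_sum => i _; rewrite compN.
Qed.

End NormProd.

Lemma norm1_le_norminf (R : realType) (X : normedModType R) (n : nat)
    (x : 'I_n -> X) :
  norm1 x <= n%:R * norminf x.
Proof.
rewrite mulr_natl -[n in _ *+ n]card_ord -sumr_const.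
by apply: ler_sum => i _; exact: (le_bigmax 0 (fun i : 'I_n => `|x i|) i).
Qed.

Theorem proposition2p3 (R : realType) (X : normedModType R) (n : nat)
  (hn : (2 <= n)%N) (N : ('I_n -> X) -> R) (hN : in_NXn N) (x : 'I_n -> X) :
  [/\ (* (i) *) \big[Num.max/0]_(i < n) N (zero_at i x) <= N x,
      (* (ii) *) (forall k : nat, (0 < k)%N -> (k < n)%N ->
                   N (trunc k x) <= N (trunc k.+1 x)) /\ N (trunc n.-1 x) <= N x &
      (* (iii) *) [/\ norminf x <= N x, N x <= norm1 x & norm1 x <= n%:R * norminf x]].
Proof.
case: hN => normN symN compN.
split.
- apply: bigmax_le => [|i _]; first exact: norm_prod_ge0.
  exact: zero_at_le.
- by split=> [k _|]; [exact: trunc_le_succ | exact: trunc_le].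
- split; [exact: norminf_le | exact: norm_prod_le_norm1 | exact: norm1_le_norminf].
Qed.
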